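(* Suppose the stochastic variational inequality in extensive form has at least one solution, and let $\{(x_k,w_k)\}$ be an infinite sequence generated by the IPHA (the stopping condition never holds). Then $\{(x_k,w_k)\}$ converges to a pair $(x^*,w^* )$ which solves the SVI in extensive form, and $x^*$ is a solution of the basic SVI.
   Context: Multistage setting: $\Xi$ is a finite set of scenarios $\xi=(\xi_1,\dots,\xi_N)$ with probabilities $p(\xi)>0$; $n=n_1+\dots+n_N$. $\mathcal L_n$ is the space of functions $x:\Xi\to\mathbb R^n$, $x(\xi)=(x_1(\xi),\dots,x_N(\xi))$, $x_j(\xi)\in\mathbb R^{n_j}$, with inner product $\langle x,w\rangle=\sum_{\xi}p(\xi)\sum_{j}\langle x_j(\xi),w_j(\xi)\rangle$. $\mathcal N=\{x\in\mathcal L_n: x_j(\xi)\text{ does not depend on }\xi_j,\dots,\xi_N\}$, $\mathcal M=\mathcal N^\perp$, with orthogonal projections $P_{\mathcal N},P_{\mathcal M}$. For each $\xi$, $C(\xi)\subset\mathbb R^n$ is nonempty closed convex and $F(\cdot,\xi):\mathbb R^n\to\mathbb R^n$ is continuous monotone; $\mathcal C=\{x\in\mathcal L_n: x(\xi)\in C(\xi)\ \forall\xi\}$ and $\mathcal F(x)(\xi)=F(x(\xi),\xi)$. $r>0$ fixed. Basic SVI: find $x\in\mathcal C\cap\mathcal N$ with $-\mathcal F(x)\in N_{\mathcal C\cap\mathcal N}(x)$. SVI in extensive form: find $x\in\mathcal N$, $w\in\mathcal M$ with $-F(x(\xi),\xi)-w(\xi)\in N_{C(\xi)}(x(\xi))$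 for all $\xi\in\Xi$. IPHA: choose $x_0\in\mathcal N$, $w_0\in\mathcal M$, $\bar\sigma\in(0,1)$, $\theta\in(0,1)$. At iteration $k$: choose $\sigma_k\in[0,\bar\sigma)$, find $\hat x^k,\hat w^k\in\mathcal L_n$ with $r(x_k(\xi)-\hat x^k(\xi))-w_k(\xi)\in F(\hat w^k(\xi),\xi)+N_{C(\xi)}(\hat w^k(\xi))$ for all $\xi$, $\delta^k=\hat w^k-\hat x^k$, and $\|\delta^k\|^2\le\sigma_k^2(\|a_k\|^2+\|b_k\|^2)$, where $a_k=x_k-P_{\mathcal N}(\hat x^k)+P_{\mathcal M}(\hat w^k)$, $b_k=x_k-P_{\mathcal N}(\hat w^k)+P_{\mathcal M}(\hat x^k)$. If $b_k=0$ stop; otherwise choose $\tau_k\in[1-\theta,1+\theta]$, set $\alpha_k=\langle a_k,b_k\rangle/\|a_k\|^2$, $x_{k+1}=x_k-\tau_k\alpha_k(x_k-P_{\mathcal N}(\hat x^k))$, $w_{k+1}=w_k+\tau_k\alpha_k rP_{\mathcal M}(\hat w^k)$. *)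

From HB Require Import structures.
From mathcomp Require Import all_boot all_order all_algebra.
From mathcomp Require Import all_classical all_reals all_analysis.
Set Implicit Arguments. Unset Strict Implicit. Unset Printing Implicit Defensive.
Import Order.TTheory GRing.Theory Num.Theory.
Import numFieldNormedType.Exports.
Local Open Scope ring_scope.
Local Open Scope classical_set_scope.

Section Pointwise.
Context {R : realType} {n : nat}.

Definition dotv (u v : 'rV[R]_n) : R := \sum_(i < n) u ord0 i * v ord0 i.

Definition cvx_set (C : set 'rV[R]_n) : Prop :=
  forall u v (t : R), C u -> C v -> 0 <= t <= 1 -> C (t *: u + (1 - t) *: v).

(* normal cone N_C(u); empty when u \notin C *)
Definition ncone (C : set 'rV[R]_n) (u : 'rV[R]_n) : set 'rV[R]_n :=
  [set v | C u /\ forall y, C y -> dotv v (y - u) <= 0].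

Definition monotone_map (F : 'rV[R]_n -> 'rV[R]_n) : Prop :=
  forall u v, 0 <= dotv (F u - F v) (u - v).

End Pointwise.

Section Scenario.
Context {R : realType} {n : nat} {Xi : finType}.

Definition Ln := {ffun Xi -> 'rV[R]_n}.

Definition ipL (p : Xi -> R) (x w : Ln) : R := \sum_(xi : Xi) p xi * dotv (x xi) (w xi).
Definition sqnormL (p : Xi -> R) (x : Ln) : R := ipL p x x.

(* nonanticipative subspace: coordinate i belongs to stage [stage i] (0-indexed);
   its value may only depend on the scenario components of stages < stage i *)
Definition nonant (N : nat) (E : 'I_N -> Type) (comp : Xi -> forall j : 'I_N, E j)
  (stage : 'I_n -> 'I_N) : set Ln :=
  [set x : Ln | forall (xi xi' : Xi) (i : 'I_n),
      (forall j : 'I_N, (j < stage i)%N -> comp xi j = comp xi' j) ->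
      x xi ord0 i = x xi' ord0 i].

Definition orthL (p : Xi -> R) (S : set Ln) : set Ln :=
  [set w | forall x, S x -> ipL p x w = 0].

Definition is_orth_proj (p : Xi -> R) (S : set Ln) (P : Ln -> Ln) : Prop :=
  forall x, S (P x) /\ forall z, S z -> ipL p (x - P x) z = 0.

(* normal cone in L_n; empty outside K *)
Definition nconeL (p : Xi -> R) (K : set Ln) (x : Ln) : set Ln :=
  [set v | K x /\ forall y, K y -> ipL p v (y - x) <= 0].

Definition liftC (C : Xi -> set 'rV[R]_n) : set Ln := [set x | forall xi, C xi (x xi)].
Definition liftF (F : Xi -> 'rV[R]_n -> 'rV[R]_n) (x : Ln) : Ln := [ffun xi => F xi (x xi)].

Definition basic_SVI p (NN : set Ln) C F (x : Ln) : Prop :=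
  nconeL p (liftC C `&` NN) x (- liftF F x).

Definition ext_SVI (NN MM : set Ln) (C : Xi -> set 'rV[R]_n)
  (F : Xi -> 'rV[R]_n -> 'rV[R]_n) (x w : Ln) : Prop :=
  NN x /\ MM w /\ forall xi, ncone (C xi) (x xi) (- F xi (x xi) - w xi).

Definition ak (PN PM : Ln -> Ln) (xk xh wh : Ln) : Ln := xk - PN xh + PM wh.
Definition bk (PN PM : Ln -> Ln) (xk xh wh : Ln) : Ln := xk - PN wh + PM xh.

Definition IPHA_run (p : Xi -> R) (NN MM : set Ln) (PN PM : Ln -> Ln)
  (C : Xi -> set 'rV[R]_n) (F : Xi -> 'rV[R]_n -> 'rV[R]_n) (r sigbar theta : R)
  (x w xh wh : nat -> Ln) (sig tau : nat -> R) : Prop :=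
  [/\ NN (x 0%N), MM (w 0%N), 0 < sigbar < 1, 0 < theta < 1 &
  forall k : nat,
    let a := ak PN PM (x k) (xh k) (wh k) in
    let b := bk PN PM (x k) (xh k) (wh k) in
    let alpha := ipL p a b / sqnormL p a in
    [/\ 0 <= sig k < sigbar,
        forall xi, exists v, ncone (C xi) (wh k xi) v /\
          r *: (x k xi - xh k xi) - w k xi = F xi (wh k xi) + v,
        sqnormL p (wh k - xh k) <= sig k ^+ 2 * (sqnormL p a + sqnormL p b),
        b <> 0 (* stopping test never met *) &
      [/\ 1 - theta <= tau k <= 1 + theta,
        x k.+1 = x k - (tau k * alpha) *: (x k - PN (xh k)) &
        w k.+1 = w k + (tau k * alpha * r) *: PM (wh k)]]].

End Scenario.

(* For any solution (xs, ws) of the extensive form, the weighted distance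
   r |x_k - xs|^2 + r^-1 |w_k - ws|^2 decreases at every step by a fixed multiple of
   |a_k|^2 + |b_k|^2: monotonicity of F(xi) and of the normal cones, together with the
   orthogonality of N and M, bounds the decrease below in terms of <a_k, b_k>, and the
   inexactness test gives 2 <a_k, b_k> >= (1 - sigbar^2) (|a_k|^2 + |b_k|^2).  Hence the
   iterates are bounded and xh_k - x_k, wh_k - x_k -> 0, so every cluster point of
   (x_k, w_k) solves the extensive form (C(xi) is closed, F(xi) continuous).  Taking that
   cluster point as (xs, ws) makes the decreasing distance tend to 0 along a subsequence,
   hence along the whole sequence.  Finally <ws, y - xs> = 0 for nonanticipative y, so
   xs solves the basic SVI. *)

From HB Require Import structures.
From mathcomp Require Import all_boot all_order all_algebra.
From mathcomp Require Import all_classical all_reals all_analysis.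
From mathcomp Require Import ring lra.
Import Order.TTheory GRing.Theory Num.Theory.
Import numFieldNormedType.Exports.
Local Open Scope ring_scope.
Local Open Scope classical_set_scope.

Section RowDot.
Context {R : realType} {n : nat}.
Implicit Types u v z : 'rV[R]_n.

Lemma dotvC u v : dotv u v = dotv v u.
Proof. by apply: eq_bigr => i _; rewrite mulrC. Qed.

Lemma dotvDl u v z : dotv (u + v) z = dotv u z + dotv v z.
Proof. by rewrite /dotv -big_split; apply: eq_bigr => i _; rewrite !mxE mulrDl. Qed.

Lemma dotvZl (a : R) u v : dotv (a *: u) v = a * dotv u v.
Proof. by rewrite /dotv mulr_sumr; apply: eq_bigr => i _; rewrite !mxE mulrA. Qed.

Lemma dotvNl u v : dotv (- u) v = - dotv u v.
Proof. by rewrite -scaleN1r dotvZl mulN1r. Qed.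

Lemma dotvBl u v z : dotv (u - v) z = dotv u z - dotv v z.
Proof. by rewrite dotvDl dotvNl. Qed.

Lemma dotvDr u v z : dotv z (u + v) = dotv z u + dotv z v.
Proof. by rewrite dotvC dotvDl !(dotvC z). Qed.

Lemma dotvBr u v z : dotv z (u - v) = dotv z u - dotv z v.
Proof. by rewrite dotvC dotvBl !(dotvC z). Qed.

Lemma dotv_ge0 u : 0 <= dotv u u.
Proof. by apply: sumr_ge0 => i _; rewrite -expr2 sqr_ge0. Qed.

Lemma sqr_coord_le_dotv u i : u ord0 i ^+ 2 <= dotv u u.
Proof.
rewrite /dotv (bigD1 i) //= -expr2 lerDl.
by apply: sumr_ge0 => j _; rewrite -expr2 sqr_ge0.
Qed.

Lemma sqr_norm_le_dotv u : `|u| ^+ 2 <= dotv u u.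
Proof.
rewrite -[`|u|]/(mx_norm u).
have [->|/mx_norm_neq0 [[i j] ->]] := eqVneq (mx_norm u) 0.
  by rewrite expr0n dotv_ge0.
by rewrite /= (ord1 i) real_normK ?num_real // sqr_coord_le_dotv.
Qed.

Lemma dotv_eq0 u : (dotv u u == 0) = (u == 0).
Proof.
apply/eqP/eqP => [u0|->]; last by rewrite /dotv big1 // => i _; rewrite mxE mulr0.
apply/rowP => i; apply/eqP; rewrite mxE -sqrf_eq0 eq_le sqr_ge0 andbT -u0.
exact: sqr_coord_le_dotv.
Qed.

End RowDot.

Section ScenarioInnerProduct.
Context {R : realType} {n : nat} {Xi : finType} {p : Xi -> R}.
Local Notation L := (@Ln R n Xi).
Local Notation ip := (ipL p).
Local Notation nm := (sqnormL p).
Implicit Types x y z : L.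

Lemma ipLC x y : ip x y = ip y x.
Proof. by apply: eq_bigr => i _; rewrite dotvC. Qed.

Lemma ipLDl x y z : ip (x + y) z = ip x z + ip y z.
Proof.
by rewrite /ipL -big_split; apply: eq_bigr => i _; rewrite !ffunE dotvDl mulrDr.
Qed.

Lemma ipLZl (a : R) x y : ip (a *: x) y = a * ip x y.
Proof.
by rewrite /ipL mulr_sumr; apply: eq_bigr => i _; rewrite !ffunE dotvZl mulrCA.
Qed.

Lemma ipLNl x y : ip (- x) y = - ip x y.
Proof. by rewrite -scaleN1r ipLZl mulN1r. Qed.

Lemma ipLBl x y z : ip (x - y) z = ip x z - ip y z.
Proof. by rewrite ipLDl ipLNl. Qed.

Lemma ipL0l x : ip 0 x = 0.
Proof. by rewrite -(scale0r 0) ipLZl mul0r. Qed.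

Lemma ipLDr x y z : ip z (x + y) = ip z x + ip z y.
Proof. by rewrite ipLC ipLDl !(ipLC z). Qed.

Lemma ipLZr (a : R) x y : ip x (a *: y) = a * ip x y.
Proof. by rewrite ipLC ipLZl ipLC. Qed.

Lemma ipLNr x y : ip x (- y) = - ip x y.
Proof. by rewrite ipLC ipLNl ipLC. Qed.

Lemma ipLBr x y z : ip z (x - y) = ip z x - ip z y.
Proof. by rewrite ipLDr ipLNr. Qed.

Lemma sqnormLN x : nm (- x) = nm x.
Proof. by rewrite /sqnormL ipLNl ipLNr opprK. Qed.

Lemma sqnormLB x y : nm (x - y) = nm x - 2 * ip x y + nm y.
Proof. rewrite /sqnormL ipLBl !ipLBr (ipLC y x); ring. Qed.

Lemma sqnormLDZ x y (s : R) :
  nm (x + s *: y) = nm x + 2 * s * ip x y + s ^+ 2 * nm y.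
Proof. rewrite /sqnormL ipLDl !ipLDr !ipLZl !ipLZr (ipLC y x); ring. Qed.

Hypothesis p_gt0 : forall xi, 0 < p xi.

Lemma dotv_le_sqnormL x xi : p xi * dotv (x xi) (x xi) <= nm x.
Proof.
rewrite /sqnormL /ipL (bigD1 xi) //= lerDl.
by apply: sumr_ge0 => i _; rewrite mulr_ge0 ?dotv_ge0 ?ltW.
Qed.

Lemma sqnormL_ge0 x : 0 <= nm x.
Proof. by apply: sumr_ge0 => i _; rewrite mulr_ge0 ?dotv_ge0 ?ltW. Qed.

Lemma sqnormL_eq0 x : (nm x == 0) = (x == 0).
Proof.
apply/eqP/eqP => [x0|->]; last by rewrite /sqnormL ipL0l.
apply/ffunP => xi; rewrite ffunE; apply/eqP; rewrite -dotv_eq0 eq_le dotv_ge0 andbT.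
by rewrite -(pmulr_rle0 _ (p_gt0 xi)) -x0 dotv_le_sqnormL.
Qed.

End ScenarioInnerProduct.

Section OrthogonalProjection.
Context {R : realType} {n : nat} {Xi : finType} {p : Xi -> R}.
Hypothesis p_gt0 : forall xi, 0 < p xi.
Local Notation L := (@Ln R n Xi).
Local Notation ip := (ipL p).
Local Notation nm := (sqnormL p).
Implicit Types (S : set L) (x y z : L).

Definition subspaceL S := S 0 /\ forall (a : R) x y, S x -> S y -> S (a *: x + y).

Lemma subspaceLZ {S} (a : R) {x} : subspaceL S -> S x -> S (a *: x).
Proof. by move=> [S0 SZD] Sx; rewrite -[_ *: x]addr0; apply: SZD. Qed.

Lemma subspaceLD {S x y} : subspaceL S -> S x -> S y -> S (x + y).
Proof. by move=> [_ SZD] Sx Sy; rewrite -[x]scale1r; apply: SZD. Qed.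

Lemma subspaceLB {S x y} : subspaceL S -> S x -> S y -> S (x - y).
Proof.
by move=> SS Sx Sy; rewrite -scaleN1r; exact: subspaceLD (subspaceLZ _ _ _).
Qed.

Lemma orthL_subspace S : subspaceL (orthL p S).
Proof.
split=> [x _|a x y Sx Sy z Sz]; first by rewrite ipLC ipL0l.
by rewrite ipLDr ipLZr Sx // Sy // mulr0 addr0.
Qed.

Lemma nonant_subspace {N : nat} {E : 'I_N -> Type} (comp : Xi -> forall j, E j)
    (stage : 'I_n -> 'I_N) :
  subspaceL (@nonant R n Xi N E comp stage).
Proof.
split=> [xi xi' i _|a x y Nx Ny xi xi' i same]; first by rewrite !ffunE !mxE.
by rewrite !ffunE !mxE (Nx xi xi' i same) (Ny xi xi' i same).
Qed.

Lemma ipL_orth_sum {S u1 u2 v1 v2} : S u1 -> S u2 -> orthL p S v1 -> orthL p S v2 ->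
  ip (u1 + v1) (u2 + v2) = ip u1 u2 + ip v1 v2.
Proof.
move=> Su1 Su2 Mv1 Mv2.
by rewrite ipLDl !ipLDr (Mv2 _ Su1) [ip v1 u2]ipLC (Mv1 _ Su2) addr0 add0r.
Qed.

Lemma sqnormL_orth_sum {S u v} : S u -> orthL p S v -> nm (u + v) = nm u + nm v.
Proof. by move=> Su Mv; rewrite /sqnormL (ipL_orth_sum Su Su Mv Mv). Qed.

Section Projections.
Context {S : set L} {PN PM : L -> L}.
Hypotheses (PNS : is_orth_proj p S PN)
  (PMS : is_orth_proj p (orthL p S) PM).

Lemma orth_projNM y : PN y + PM y = y.
Proof.
have [SPN PN_orth] := PNS y; have [MPM PM_orth] := PMS y.
have M_res : orthL p S (y - PN y) by move=> z Sz; rewrite ipLC PN_orth.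
pose d := PM y - (y - PN y).
have Md : orthL p S d := subspaceLB (orthL_subspace S) MPM M_res.
have := PM_orth d Md.
rewrite [y - PM y](_ : _ = PN y - d); last by rewrite /d opprB addrA subrKC.
rewrite ipLBl (Md _ SPN) sub0r => /eqP.
by rewrite oppr_eq0 -[ip d d]/(nm d) sqnormL_eq0 // subr_eq0 => /eqP ->; rewrite addrC subrK.
Qed.

Lemma orthL_orthL_sub z : orthL p (orthL p S) z -> S z.
Proof.
move=> zMM; have [SPN PN_orth] := PNS z.
have M_res : orthL p S (z - PN z) by move=> y Sy; rewrite ipLC PN_orth.
have /eqP : nm (z - PN z) = 0.
  by rewrite /sqnormL {1}ipLBl ipLC zMM // M_res // subr0.
by rewrite sqnormL_eq0 // subr_eq0 => /eqP ->.
Qed.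

End Projections.

Lemma ext_SVI_basic S C F x w : subspaceL S ->
  ext_SVI S (orthL p S) C F x w -> basic_SVI p S C F x.
Proof.
move=> SS [Sx [Mw xsol]]; split=> [|y [Cy Sy]]; first by split=> // xi; case: (xsol xi).
have -> : ip (- liftF F x) (y - x) = ip (- liftF F x - w) (y - x) + ip w (y - x).
  by rewrite ipLBl subrK.
rewrite [ip w _]ipLC Mw ?addr0; last exact: subspaceLB SS Sy Sx.
apply: sumr_le0 => xi _; rewrite !ffunE.
by apply: mulr_ge0_le0; [exact: ltW | case: (xsol xi) => _; apply].
Qed.

End OrthogonalProjection.

Section Convergence.
Context {R : realType}.

Lemma cvg_sum_fin (I : finType) (f : I -> nat -> R) (l : I -> R) :
  (forall i, f i @ \oo --> l i) -> (fun k => \sum_(i : I) f i k) @ \oo --> \sum_(i : I) l i.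
Proof. by move=> fl; apply: cvg_big => //; exact: add_continuous. Qed.

Lemma squeeze_cvg0 {u v : R^nat} :
  (forall k, 0 <= u k <= v k) -> v @ \oo --> (0 : R) -> u @ \oo --> (0 : R).
Proof.
move=> uv v0; apply: (@squeeze_cvgr _ _ _ _ (fun=> 0) v u _ 0 _ v0); last exact: cvg_cst.
exact: nearW.
Qed.

Lemma cvg_comp_increasing {T : topologicalType} {u : nat -> T} {f : nat -> nat} {l : T} :
  increasing_seq f -> u @ \oo --> l -> (u \o f) @ \oo --> l.
Proof.
move=> /increasing_seqP f_incr ul; apply: cvg_comp ul => A [N _ NA].
have f_ge k : (k <= f k)%N by elim: k => // k IHk; exact: leq_ltn_trans IHk (f_incr k).
by exists N => // m /= Nm; apply: NA; exact: leq_trans Nm (f_ge m).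
Qed.

Lemma increasing_seq_comp {f g : nat -> nat} :
  increasing_seq f -> increasing_seq g -> increasing_seq (f \o g).
Proof. by move=> f_incr g_incr a b /=; rewrite f_incr; exact: g_incr. Qed.

Lemma bolzano_weierstrass_fin (T : finType) (u : T -> nat -> R) :
  (forall t, exists M, forall k, `|u t k| <= M) ->
  exists2 f : nat -> nat, increasing_seq f & forall t, cvgn (u t \o f).
Proof.
move=> u_bnd.
suff [f f_incr fcvg] : exists2 f : nat -> nat, increasing_seq f &
    forall t, t \in enum T -> cvgn (u t \o f).
  by exists f => // t; apply: fcvg; rewrite mem_enum.
elim: (enum T) => [|t s [f f_incr fcvg]]; first by exists id.
have [M uM] := u_bnd t.
have [|g g_incr gcvg] := @bolzano_weierstrass R (u t \o f).
  by exists M; split=> [|y My k _]; [exact: num_real | exact: le_trans (uM _) (ltW My)].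
exists (f \o g); first exact: increasing_seq_comp.
move=> t'; rewrite inE => /predU1P[-> //|t's].
have /cvg_ex [l ul] := fcvg t' t's.
by apply/cvg_ex; exists l; exact: cvg_comp_increasing ul.
Qed.

Lemma nonincreasing_cvg_subseq {u : R^nat} {f : nat -> nat} {l : R} :
  nonincreasing_seq u -> has_lbound (range u) -> increasing_seq f ->
  (u \o f) @ \oo --> l -> u @ \oo --> l.
Proof.
move=> u_noninc u_lb f_incr ufl.
have /cvg_ex [l' ul'] := nonincreasing_is_cvgn u_noninc u_lb.
suff -> : l = l' by [].
have ufl' := cvg_comp_increasing f_incr ul'.
by rewrite -(cvg_lim (@Rhausdorff R) ufl) (cvg_lim (@Rhausdorff R) ufl').
Qed.

Context {n : nat}.
Implicit Types (u : nat -> 'rV[R]_n) (v : 'rV[R]_n).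

Lemma cvg_rV_coord u v i : u @ \oo --> v -> (fun k => u k ord0 i) @ \oo --> v ord0 i.
Proof. exact: (continuous_cvg _ (@coord_continuous _ 1 n ord0 i v)). Qed.

Lemma cvg_rV_coords u v :
  (forall i, (fun k => u k ord0 i) @ \oo --> v ord0 i) -> u @ \oo --> v.
Proof.
move=> uv; apply/cvg_mx_entourageP => A entA.
apply: filter_forall => i; apply: filter_forall => j; rewrite (ord1 i).
have /cvg_app_entourageP/(_ A entA) := uv j.
by apply: filterS => k; rewrite /= in_setE.
Qed.

Lemma cvg_dotv u u' v v' : u @ \oo --> v -> u' @ \oo --> v' ->
  (fun k => dotv (u k) (u' k)) @ \oo --> dotv v v'.
Proof. by move=> uv uv'; apply: cvg_sum_fin => i; apply: cvgM; exact: cvg_rV_coord. Qed.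

Lemma cvg_dotv0 u :
  (fun k => dotv (u k) (u k)) @ \oo --> (0 : R) -> u @ \oo --> (0 : 'rV[R]_n).
Proof.
move=> u0; apply/cvgr0Pnorm_lt => e e_gt0; near=> k.
have : `|dotv (u k) (u k)| < e ^+ 2 by near: k; apply: cvgr0_norm_lt u0 _ _; rewrite exprn_gt0.
rewrite ger0_norm ?dotv_ge0 // => uk_lt.
have := sqr_norm_le_dotv (u k); have := normr_ge0 (u k); nra.
Unshelve. all: by end_near. Qed.

End Convergence.

Lemma ncone_closed_graph {R : realType} {n : nat} {C : set 'rV[R]_n}
    {u v : nat -> 'rV[R]_n} {u0 v0 : 'rV[R]_n} :
  closed C -> u @ \oo --> u0 -> v @ \oo --> v0 ->
  (forall k, ncone C (u k) (v k)) -> ncone C u0 v0.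
Proof.
move=> Ccl uu0 vv0 uv; split=> [|y Cy].
  by apply: (closed_cvg _ Ccl _ _ uu0); apply: nearW => k; case: (uv k).
have : (fun k => dotv (v k) (y - u k)) @ \oo --> dotv v0 (y - u0).
  by apply: cvg_dotv => //; apply: cvgB => //; exact: cvg_cst.
apply: (closed_cvg [set t : R | t <= 0] (@closed_le R 0)).
by apply: nearW => k; case: (uv k) => _; apply.
Qed.

Section ScenarioConvergence.
Context {R : realType} {n : nat} {Xi : finType} {p : Xi -> R}.
Hypothesis p_gt0 : forall xi, 0 < p xi.
Local Notation L := (@Ln R n Xi).
Local Notation ip := (ipL p).
Local Notation nm := (sqnormL p).
Implicit Types (z : nat -> L) (y l : L).

Definition scenario_cvg z l := forall xi, (fun k => z k xi) @ \oo --> l xi.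

Lemma sqnormL_cvg0P z z' :
  (forall xi, (fun k => z k xi - z' k xi) @ \oo --> (0 : 'rV[R]_n)) <->
  (fun k => nm (z k - z' k)) @ \oo --> (0 : R).
Proof.
have coordB k xi : (z k - z' k) xi = z k xi - z' k xi by rewrite !ffunE.
split=> [zz'|nm0 xi].
  have -> : 0 = \sum_(xi : Xi) p xi * dotv (0 : 'rV[R]_n) 0.
    by rewrite big1 // => xi _; rewrite /dotv big1 ?mulr0 // => i _; rewrite mxE mul0r.
  apply: cvg_sum_fin => xi; apply: cvgMl_tmp.
  by under eq_cvg do rewrite coordB; exact: cvg_dotv.
apply/cvg_dotv0/(squeeze_cvg0 (v := fun k => nm (z k - z' k) / p xi)) => [k|].
  by rewrite dotv_ge0 ler_pdivlMr // mulrC -coordB dotv_le_sqnormL.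
by rewrite -(mul0r (p xi)^-1); apply: cvgMr_tmp.
Qed.

Lemma scenario_cvgP z l :
  scenario_cvg z l <-> (fun k => nm (z k - l)) @ \oo --> (0 : R).
Proof.
rewrite -(sqnormL_cvg0P z (fun=> l)).
by split=> zl xi; [apply/subr_cvg0 | apply/subr_cvg0]; exact: zl.
Qed.

Lemma scenario_cvg_comp {z l f} :
  increasing_seq f -> scenario_cvg z l -> scenario_cvg (z \o f) l.
Proof. by move=> f_incr zl xi; exact: cvg_comp_increasing f_incr (zl xi). Qed.

Lemma cvg_ipLr y {z l} : scenario_cvg z l -> (fun k => ip y (z k)) @ \oo --> ip y l.
Proof.
move=> zl; apply: cvg_sum_fin => xi; apply: cvgMl_tmp.
by apply: cvg_dotv => //; exact: cvg_cst.
Qed.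

Lemma orthL_scenario_closed {S z l} :
  scenario_cvg z l -> (forall k, orthL p S (z k)) -> orthL p S l.
Proof.
move=> zl Mz y Sy; have := cvg_ipLr y zl.
under eq_cvg do rewrite Mz //.
by move=> /(cvg_lim (@Rhausdorff R)) <-; rewrite lim_cst.
Qed.

Lemma bounded_scenario_subseq {z l M} : (forall k, nm (z k - l) <= M) ->
  exists2 f : nat -> nat, increasing_seq f & exists l', scenario_cvg (z \o f) l'.
Proof.
move=> zM; pose u (t : Xi * 'I_n) k := z k t.1 ord0 t.2.
have [|f f_incr fcvg] := @bolzano_weierstrass_fin R _ u.
  move=> [xi i]; exists (`|l xi ord0 i| + 1 + M / p xi) => k; rewrite /u /=.
  set c := z k xi ord0 i - l xi ord0 i.
  have c2M : c ^+ 2 <= M / p xi.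
    rewrite ler_pdivlMr // mulrC; apply: le_trans (zM k).
    apply: le_trans (dotv_le_sqnormL p_gt0 _ xi); rewrite ler_pM2l //.
    by have := sqr_coord_le_dotv ((z k - l) xi) i; rewrite !ffunE !mxE.
  have : `|c| ^+ 2 = c ^+ 2 by rewrite real_normK ?num_real.
  have -> : z k xi ord0 i = l xi ord0 i + c by rewrite addrC subrK.
  have := ler_normD (l xi ord0 i) c; have := normr_ge0 c; nra.
exists f => //; exists [ffun xi => \row_i limn (u (xi, i) \o f)] => xi.
by apply: cvg_rV_coords => i; rewrite ffunE mxE; exact: fcvg.
Qed.

End ScenarioConvergence.

Lemma relaxed_step_gain {R : realFieldType} {A B S gam theta tau : R} :
  0 < A -> A <= S -> 0 <= gam -> gam * S <= B -> 0 <= theta <= 1 ->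
  1 - theta <= tau <= 1 + theta ->
  (1 - theta ^+ 2) * gam ^+ 2 * S <= tau * (2 - tau) * (B ^+ 2 / A).
Proof.
move=> A_gt0 AS gam_ge0 gamSB /andP[th0 th1] /andP[tau_lo tau_hi].
have S_gt0 : 0 < S by exact: lt_le_trans AS.
have gain_tau : 1 - theta ^+ 2 <= tau * (2 - tau) by nra.
have gain_B : gam ^+ 2 * S <= B ^+ 2 / A.
  have gS_ge0 : 0 <= gam * S by rewrite mulr_ge0 // ltW.
  rewrite ler_pdivlMr //; apply: le_trans (ler_pM gS_ge0 gS_ge0 gamSB gamSB).
  rewrite (_ : gam * S * (gam * S) = gam ^+ 2 * S * S); last by ring.
  by rewrite ler_wpM2l // mulr_ge0 ?sqr_ge0 // ltW.
rewrite -mulrA; apply: ler_pM => //; first by rewrite subr_ge0 expr_le1.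
by rewrite mulr_ge0 ?sqr_ge0 ?ltW.
Qed.

Lemma ncone_monotone {R : realType} {n : nat} (C : set 'rV[R]_n) u u' v v' :
  ncone C u v -> ncone C u' v' -> 0 <= dotv (v - v') (u - u').
Proof.
move=> [Cu vN] [Cu' v'N]; have := vN _ Cu'; have := v'N _ Cu.
by rewrite dotvBl !dotvBr; lra.
Qed.

Section IPHA.
Context {R : realType} {n : nat} {Xi : finType} {p : Xi -> R}.
Hypothesis p_gt0 : forall xi, 0 < p xi.
Local Notation L := (@Ln R n Xi).
Local Notation ip := (ipL p).
Local Notation nm := (sqnormL p).
Context {NN : set L} {PN PM : L -> L}.
Local Notation MM := (orthL p NN).
Hypotheses (NN_sub : subspaceL NN)
  (PNP : is_orth_proj p NN PN) (PMP : is_orth_proj p MM PM).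
Context {C : Xi -> set 'rV[R]_n} {F : Xi -> 'rV[R]_n -> 'rV[R]_n}.
Hypotheses (C_closed : forall xi, closed (C xi))
  (F_cont : forall xi, continuous (F xi)) (F_mono : forall xi, monotone_map (F xi)).
Context {r sigbar theta : R} {x w xh wh : nat -> L} {sig tau : nat -> R}.
Hypotheses (r_gt0 : 0 < r)
  (run : IPHA_run p NN MM PN PM C F r sigbar theta x w xh wh sig tau).

Let MM_sub : subspaceL MM := orthL_subspace NN.
Let projNM y : PN y + PM y = y := orth_projNM p_gt0 PNP PMP y.
Let a k := ak PN PM (x k) (xh k) (wh k).
Let b k := bk PN PM (x k) (xh k) (wh k).
Let S k := nm (a k) + nm (b k).
Let alpha k := ip (a k) (b k) / nm (a k).

Let sigbar_bnd : 0 < sigbar < 1. Proof. by case: run. Qed.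
Let theta_bnd : 0 < theta < 1. Proof. by case: run. Qed.
Let sig_bnd k : 0 <= sig k < sigbar. Proof. by case: run => _ _ _ _ /(_ k) []. Qed.
Let wh_solves k xi : exists v, ncone (C xi) (wh k xi) v /\
    r *: (x k xi - xh k xi) - w k xi = F xi (wh k xi) + v.
Proof. by case: run => _ _ _ _ /(_ k) []. Qed.
Let inexact k : nm (wh k - xh k) <= sig k ^+ 2 * S k.
Proof. by case: run => _ _ _ _ /(_ k) []. Qed.
Let b_neq0 k : b k <> 0. Proof. by case: run => _ _ _ _ /(_ k) []. Qed.
Let tau_bnd k : 1 - theta <= tau k <= 1 + theta.
Proof. by case: run => _ _ _ _ /(_ k) [_ _ _ _ []]. Qed.
Let x_update k : x k.+1 = x k - (tau k * alpha k) *: (x k - PN (xh k)).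
Proof. by case: run => _ _ _ _ /(_ k) [_ _ _ _ []]. Qed.
Let w_update k : w k.+1 = w k + (tau k * alpha k * r) *: PM (wh k).
Proof. by case: run => _ _ _ _ /(_ k) [_ _ _ _ []]. Qed.

Lemma ipha_iterates_nonant k : NN (x k) /\ MM (w k).
Proof.
elim: k => [|k [Nx Mw]]; first by case: run.
rewrite x_update w_update; split.
  exact: subspaceLB NN_sub Nx (subspaceLZ _ NN_sub (subspaceLB NN_sub Nx (PNP _).1)).
exact: subspaceLD MM_sub Mw (subspaceLZ _ MM_sub (PMP _).1).
Qed.

Let xN k : NN (x k - PN (xh k)) := subspaceLB NN_sub (ipha_iterates_nonant k).1 (PNP _).1.
Let xN' k : NN (x k - PN (wh k)) := subspaceLB NN_sub (ipha_iterates_nonant k).1 (PNP _).1.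

Lemma sqnormL_a k : nm (a k) = nm (x k - PN (xh k)) + nm (PM (wh k)).
Proof. exact: sqnormL_orth_sum (xN k) (PMP _).1. Qed.

Lemma sqnormL_b k : nm (b k) = nm (x k - PN (wh k)) + nm (PM (xh k)).
Proof. exact: sqnormL_orth_sum (xN' k) (PMP _).1. Qed.

Lemma ipL_ab k :
  ip (a k) (b k) = ip (x k - PN (xh k)) (x k - PN (wh k)) + ip (PM (wh k)) (PM (xh k)).
Proof. exact: ipL_orth_sum (xN k) (xN' k) (PMP _).1 (PMP _).1. Qed.

Lemma ipha_ab_ge k : (1 - sig k ^+ 2) * S k <= 2 * ip (a k) (b k).
Proof.
have ab : a k - b k = wh k - xh k.
  rewrite /a /b /ak /bk -{3}(projNM (wh k)) -{3}(projNM (xh k)).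
  by apply/ffunP => xi; apply/rowP => i; rewrite !ffunE !mxE; ring.
by have := inexact k; rewrite -ab sqnormLB /S; lra.
Qed.

Let S_ge0 k : 0 <= S k. Proof. by rewrite addr_ge0 ?sqnormL_ge0. Qed.

Let sigbar_gap : 0 < 1 - sigbar ^+ 2.
Proof. by have := sigbar_bnd; rewrite subr_gt0; nra. Qed.

Let sig_gap k : 1 - sigbar ^+ 2 <= 1 - sig k ^+ 2.
Proof. by have := sig_bnd k; rewrite lerD2l lerN2; nra. Qed.

Lemma sqnormL_a_gt0 k : 0 < nm (a k).
Proof.
rewrite lt_def sqnormL_ge0 // andbT sqnormL_eq0 //; apply/eqP => a0.
apply: (b_neq0 k); apply/eqP; rewrite -(sqnormL_eq0 p_gt0) eq_le sqnormL_ge0 // andbT.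
have := ipha_ab_ge k; rewrite /S a0 /sqnormL !ipL0l add0r mulr0 pmulr_rle0 //.
exact: lt_le_trans sigbar_gap (sig_gap k).
Qed.

Lemma ipha_residuals_le k : nm (xh k - x k) <= S k /\ nm (wh k - x k) <= S k.
Proof.
have split_res y : nm (y - x k) = nm (x k - PN y) + nm (PM y).
  have -> : y - x k = (PN y - x k) + PM y by rewrite -{1}(projNM y) addrAC.
  have Nx := (ipha_iterates_nonant k).1.
  by rewrite (sqnormL_orth_sum (subspaceLB NN_sub (PNP y).1 Nx) (PMP y).1) -sqnormLN opprB.
rewrite /S sqnormL_a sqnormL_b !split_res.
have := sqnormL_ge0 p_gt0 (PM (wh k)); have := sqnormL_ge0 p_gt0 (PM (xh k)).
have := sqnormL_ge0 p_gt0 (x k - PN (xh k)); have := sqnormL_ge0 p_gt0 (x k - PN (wh k)).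
by split; lra.
Qed.

Lemma ipha_monotone_step {x' w' : L} k :
  (forall xi, ncone (C xi) (x' xi) (- F xi (x' xi) - w' xi)) ->
  0 <= ip (wh k - x') (r *: (x k - xh k) - w k + w').
Proof.
move=> x'sol; apply: sumr_ge0 => xi _; apply: mulr_ge0; first exact: ltW.
have [v [vN e]] := wh_solves k xi; rewrite !ffunE e.
have -> : F xi (wh k xi) + v + w' xi =
    (F xi (wh k xi) - F xi (x' xi)) + (v - (- F xi (x' xi) - w' xi)).
  by apply/rowP => i; rewrite !mxE; ring.
rewrite dotvDr dotvC [dotv _ (v - _)]dotvC.
by apply: addr_ge0; [exact: F_mono | exact: ncone_monotone vN (x'sol xi)].
Qed.

Definition ipha_dist (x' w' : L) k := r * nm (x k - x') + r^-1 * nm (w k - w').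

Lemma ipha_dist_step (x' w' : L) k : let t := tau k * alpha k in
  ipha_dist x' w' k.+1 = ipha_dist x' w' k
    - 2 * t * (r * ip (x k - x') (x k - PN (xh k)) - ip (w k - w') (PM (wh k)))
    + t ^+ 2 * r * nm (a k).
Proof.
move=> t; rewrite /ipha_dist x_update w_update -/t.
have -> : x k - t *: (x k - PN (xh k)) - x' = (x k - x') + (- t) *: (x k - PN (xh k)).
  by rewrite scaleNr addrAC.
rewrite [w k + _ - w']addrAC !sqnormLDZ sqnormL_a.
by field; rewrite lt0r_neq0.
Qed.

Lemma ipha_cross_ge {x' w' : L} k : NN x' -> MM w' ->
  (forall xi, ncone (C xi) (x' xi) (- F xi (x' xi) - w' xi)) ->
  r * ip (a k) (b k) <= r * ip (x k - x') (x k - PN (xh k)) - ip (w k - w') (PM (wh k)).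
Proof.
move=> Nx' Mw' x'sol; have := ipha_monotone_step k x'sol.
have [Nx Mw] := ipha_iterates_nonant k.
have -> : wh k - x' = (PN (wh k) - x') + PM (wh k) by rewrite -{1}(projNM (wh k)) addrAC.
have -> : r *: (x k - xh k) - w k + w' =
    r *: (x k - PN (xh k)) + ((w' - w k) - r *: PM (xh k)).
  rewrite -{1}(projNM (xh k)).
  by apply/ffunP => xi; apply/rowP => i; rewrite !ffunE !mxE; ring.
(* Split both arguments along N + M, where the cross terms vanish. *)
rewrite (ipL_orth_sum (subspaceLB NN_sub (PNP _).1 Nx') (subspaceLZ _ NN_sub (xN k))
  (PMP _).1 (subspaceLB MM_sub (subspaceLB MM_sub Mw' Mw) (subspaceLZ _ MM_sub (PMP _).1))).
move=> mono; rewrite ipLZr [ip (PM _) _]ipLBr ipLZr -[w' - w k]opprB ipLNr in mono.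
rewrite ipL_ab -[x k - x'](subrKA (PN (wh k))) [ip (_ + (_ - x')) _]ipLDl.
rewrite [ip (x k - PN (wh k)) _]ipLC [ip (w k - w') _]ipLC.
lra.
Qed.

Definition ipha_rate := r * (1 - theta ^+ 2) * ((1 - sigbar ^+ 2) / 2) ^+ 2.

Lemma ipha_rate_gt0 : 0 < ipha_rate.
Proof.
rewrite !mulr_gt0 ?exprn_gt0 ?divr_gt0 //.
by have := theta_bnd; rewrite subr_gt0; nra.
Qed.

Lemma ipha_fejer {x' w' : L} k : ext_SVI NN MM C F x' w' ->
  ipha_dist x' w' k.+1 <= ipha_dist x' w' k - ipha_rate * S k.
Proof.
move=> [Nx' [Mw' x'sol]].
set gam := (1 - sigbar ^+ 2) / 2.
have gam_ge0 : 0 <= gam by rewrite divr_ge0 ?ltW.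
have gamS : gam * S k <= ip (a k) (b k).
  by have := ler_wpM2r (S_ge0 k) (sig_gap k); have := ipha_ab_ge k; rewrite /gam; lra.
have aS : nm (a k) <= S k by rewrite lerDl sqnormL_ge0.
have theta01 : 0 <= theta <= 1 by have := theta_bnd; move=> /andP[? ?]; rewrite !ltW.
have gain := relaxed_step_gain (sqnormL_a_gt0 k) aS gam_ge0 gamS theta01 (tau_bnd k).
have t_ge0 : 0 <= tau k * alpha k.
  have := tau_bnd k; have := theta_bnd => /andP[_ ?] /andP[? _].
  rewrite mulr_ge0 ?divr_ge0 ?sqnormL_ge0 //; first lra.
  by apply: le_trans gamS; rewrite mulr_ge0 ?S_ge0.
have key : 2 * (tau k * alpha k) * (r * ip (a k) (b k)) - (tau k * alpha k) ^+ 2 * r * nm (a k)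
    = r * (tau k * (2 - tau k) * (ip (a k) (b k) ^+ 2 / nm (a k))).
  by rewrite /alpha; field; rewrite lt0r_neq0 // sqnormL_a_gt0.
have := ler_wpM2l t_ge0 (ipha_cross_ge k Nx' Mw' x'sol).
have := ler_wpM2l (ltW r_gt0) gain.
rewrite ipha_dist_step /ipha_rate -/gam; lra.
Qed.


Section IPHAConvergence.
Context {xs ws : L}.
Hypothesis sol : ext_SVI NN MM C F xs ws.
Local Notation D := (ipha_dist xs ws).

Lemma ipha_dist_ge0 k : 0 <= D k.
Proof. by rewrite addr_ge0 // mulr_ge0 ?sqnormL_ge0 ?invr_ge0 ?ltW. Qed.

Lemma ipha_dist_noninc : nonincreasing_seq D.
Proof.
apply/nonincreasing_seqP => k; apply: le_trans (ipha_fejer k sol) _.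
by rewrite gerBl mulr_ge0 ?S_ge0 ?ltW ?ipha_rate_gt0.
Qed.

Lemma ipha_S_cvg0 : S @ \oo --> (0 : R).
Proof.
have /cvg_ex [l Dl] : cvgn D.
  apply: nonincreasing_is_cvgn ipha_dist_noninc _.
  by exists 0 => _ [k _ <-]; exact: ipha_dist_ge0.
apply: (squeeze_cvg0 (v := fun k => (D k - D k.+1) / ipha_rate)) => [k|].
  rewrite S_ge0 ler_pdivlMr ?ipha_rate_gt0 //.
  by have := ipha_fejer k sol; rewrite mulrC; lra.
rewrite -(mul0r ipha_rate^-1) -(subrr l); apply: cvgMr_tmp; apply: cvgB => //.
by rewrite -(cvg_shiftS D) in Dl.
Qed.

Lemma ipha_residuals_cvg0 xi :
  (fun k => xh k xi - x k xi) @ \oo --> (0 : 'rV[R]_n) /\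
  (fun k => wh k xi - x k xi) @ \oo --> (0 : 'rV[R]_n).
Proof.
have residual_cvg0 (y : nat -> L) : (forall k, nm (y k - x k) <= S k) ->
    (fun k => y k xi - x k xi) @ \oo --> (0 : 'rV[R]_n).
  move=> yS; apply: (sqnormL_cvg0P p_gt0 y x).2 xi.
  by apply: (squeeze_cvg0 (v := S)) ipha_S_cvg0 => k; rewrite sqnormL_ge0 ?yS.
by split; apply: residual_cvg0 => k; case: (ipha_residuals_le k).
Qed.

Lemma ipha_bounded : exists M, forall k, nm (x k - xs) <= M /\ nm (w k - ws) <= M.
Proof.
exists (Num.max (D 0 / r) (D 0 * r)) => k.
have Dk : D k <= D 0 by apply: ipha_dist_noninc.
have [xk_ge0 wk_ge0] := (sqnormL_ge0 p_gt0 (x k - xs), sqnormL_ge0 p_gt0 (w k - ws)).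
split; rewrite le_max; apply/orP; [left|right].
  rewrite ler_pdivlMr // mulrC; apply: le_trans Dk.
  by rewrite lerDl mulr_ge0 // invr_ge0 ltW.
rewrite -ler_pdivrMr // mulrC; apply: le_trans Dk.
by rewrite lerDr mulr_ge0 // ltW.
Qed.


Lemma ipha_limit_solution f x1 w1 : increasing_seq f ->
  scenario_cvg (x \o f) x1 -> scenario_cvg (w \o f) w1 -> ext_SVI NN MM C F x1 w1.
Proof.
move=> f_incr xx1 ww1; split; [|split].
- (* N is closed, being the orthogonal complement of M. *)
  apply: (orthL_orthL_sub p_gt0 PNP); apply: (orthL_scenario_closed xx1) => k u Mu.
  by rewrite ipLC; apply: Mu; exact: (ipha_iterates_nonant _).1.
- by apply: (orthL_scenario_closed ww1) => k; exact: (ipha_iterates_nonant _).2.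
move=> xi; have [res_xh res_wh] := ipha_residuals_cvg0 xi.
have whx1 : (fun k => wh (f k) xi) @ \oo --> x1 xi.
  rewrite -[x1 xi]addr0.
  under eq_cvg => k do rewrite -(subrKC (x (f k) xi) (wh (f k) xi)).
  by apply: cvgD; [exact: xx1 | exact: cvg_comp_increasing f_incr res_wh].
have xhx0 : (fun k => x (f k) xi - xh (f k) xi) @ \oo --> (0 : 'rV[R]_n).
  rewrite -oppr0; under eq_cvg => k do rewrite -opprB.
  exact: cvgN (cvg_comp_increasing f_incr res_xh).
apply: (ncone_closed_graph (C_closed xi) whx1
  (v := fun k => r *: (x (f k) xi - xh (f k) xi) - w (f k) xi - F xi (wh (f k) xi))).
- rewrite -[- _ - _]add0r -(scaler0 _ r) [- F _ _ - _]addrC addrA.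
  apply: cvgB; [apply: cvgB => //; exact: cvgZr | exact: cvg_comp whx1 (F_cont xi _)].
move=> k; have [v [vN ->]] := wh_solves (f k) xi.
by rewrite [F xi _ + v]addrC addrK.
Qed.

Lemma ipha_cluster : exists2 f : nat -> nat, increasing_seq f & exists x1 w1,
  [/\ ext_SVI NN MM C F x1 w1, scenario_cvg (x \o f) x1 & scenario_cvg (w \o f) w1].
Proof.
have [M xwM] := ipha_bounded.
have [f f_incr [x1 xx1]] := bounded_scenario_subseq p_gt0 (fun k => (xwM k).1).
have [g g_incr [w1 ww1]] := bounded_scenario_subseq p_gt0 (fun k => (xwM (f k)).2).
have fg_incr := increasing_seq_comp f_incr g_incr.
exists (f \o g) => //; exists x1, w1; have xx1' := scenario_cvg_comp g_incr xx1.
by split => //; exact: ipha_limit_solution fg_incr xx1' ww1.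
Qed.

Lemma ipha_dist_cvg0 : D @ \oo --> (0 : R) -> scenario_cvg x xs /\ scenario_cvg w ws.
Proof.
move=> D0; split; apply/(scenario_cvgP p_gt0).
  apply: (squeeze_cvg0 (v := fun k => D k / r)) => [k|].
    rewrite sqnormL_ge0 // ler_pdivlMr // mulrC lerDl.
    by rewrite mulr_ge0 ?sqnormL_ge0 // invr_ge0 ltW.
  by rewrite -(mul0r r^-1); apply: cvgMr_tmp.
apply: (squeeze_cvg0 (v := fun k => D k * r)) => [k|].
  rewrite sqnormL_ge0 // -ler_pdivrMr // mulrC lerDr.
  by rewrite mulr_ge0 ?sqnormL_ge0 // ltW.
by rewrite -(mul0r r); apply: cvgMr_tmp.
Qed.

End IPHAConvergence.

Lemma ipha_cvg : (exists xs ws, ext_SVI NN MM C F xs ws) -> exists x1 w1,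
  [/\ scenario_cvg x x1, scenario_cvg w w1 & ext_SVI NN MM C F x1 w1].
Proof.
move=> [xs [ws sol]]; have [f f_incr [x1 [w1 [sol1 xx1 ww1]]]] := ipha_cluster sol.
exists x1, w1; suff [] : scenario_cvg x x1 /\ scenario_cvg w w1 by [].
apply: ipha_dist_cvg0; apply: (nonincreasing_cvg_subseq (ipha_dist_noninc sol1) _ f_incr).
  by exists 0 => _ [k _ <-]; exact: ipha_dist_ge0.
rewrite -(addr0 0) -[X in X + _](mulr0 r) -[X in _ + X](mulr0 r^-1).
by apply: cvgD; apply: cvgMl_tmp; apply/(scenario_cvgP p_gt0).
Qed.

End IPHA.

Theorem corollary1 (R : realType) (Xi : finType) (N : nat) (E : 'I_N -> Type)
  (comp : Xi -> forall j : 'I_N, E j) (n : nat) (stage : 'I_n -> 'I_N)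
  (p : Xi -> R) (C : Xi -> set 'rV[R]_n) (F : Xi -> 'rV[R]_n -> 'rV[R]_n)
  (PN PM : @Ln R n Xi -> @Ln R n Xi) (r sigbar theta : R)
  (x w xh wh : nat -> @Ln R n Xi) (sig tau : nat -> R) :
  injective comp ->
  {homo stage : i j / (i <= j)%N} ->
  (forall xi, 0 < p xi) -> \sum_(xi : Xi) p xi = 1 ->
  (forall xi, C xi !=set0 /\ closed (C xi) /\ cvx_set (C xi)) ->
  (forall xi, continuous (F xi) /\ monotone_map (F xi)) ->
  0 < r ->
  is_orth_proj p (nonant comp stage) PN ->
  is_orth_proj p (orthL p (nonant comp stage)) PM ->
  (exists x0 w0, ext_SVI (nonant comp stage) (orthL p (nonant comp stage)) C F x0 w0) ->
  IPHA_run p (nonant comp stage) (orthL p (nonant comp stage)) PN PM C F r sigbar theta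
    x w xh wh sig tau ->
  exists xs ws : @Ln R n Xi,
    [/\ forall xi, (fun k => x k xi) @ \oo --> xs xi,
        forall xi, (fun k => w k xi) @ \oo --> ws xi,
        ext_SVI (nonant comp stage) (orthL p (nonant comp stage)) C F xs ws &
        basic_SVI p (nonant comp stage) C F xs].
Proof.
move=> _ _ p_gt0 _ C_prop F_prop r_gt0 PNP PMP sol run.
have C_closed xi : closed (C xi) by case: (C_prop xi) => _ [].
have [xs [ws [xxs wws sol_s]]] := ipha_cvg p_gt0 (nonant_subspace comp stage) PNP PMP C_closed
  (fun xi => (F_prop xi).1) (fun xi => (F_prop xi).2) r_gt0 run sol.
by exists xs, ws; split => //; exact: ext_SVI_basic (nonant_subspace comp stage) sol_s.
Qed.
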